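(* For any formulas $A$ and $B$, each of the following rules (with $\Gamma,\Delta$ arbitrary finite multisets of formulas) is strongly admissible in $\mathsf{Grz}_\infty+\mathsf{cut}$: $\mathsf{li}_{A\to B}$: from $\Gamma,A\to B\Rightarrow\Delta$ infer $\Gamma,B\Rightarrow\Delta$; $\mathsf{ri}_{A\to B}$: from $\Gamma,A\to B\Rightarrow\Delta$ infer $\Gamma\Rightarrow A,\Delta$; $\mathsf{i}_{A\to B}$: from $\Gamma\Rightarrow A\to B,\Delta$ infer $\Gamma,A\Rightarrow B,\Delta$; $\mathsf{i}_\bot$: from $\Gamma\Rightarrow\bot,\Delta$ infer $\Gamma\Rightarrow\Delta$; $\mathsf{li}_{\Box A}$: from $\Gamma\Rightarrow\Box A,\Delta$ infer $\Gamma\Rightarrow A,\Delta$.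
   Context: Formulas are built from $\bot$ and atoms by $\to$ and $\Box$; sequents $\Gamma\Rightarrow\Delta$ have finite multisets of formulas on each side; $\Box\Pi$ denotes $\{\Box B:B\in\Pi\}$. The calculus $\mathsf{Grz}_\infty+\mathsf{cut}$ has initial sequents $\Gamma,p\Rightarrow p,\Delta$ ($p$ atomic), $\Gamma,\bot\Rightarrow\Delta$, and rules $(\to_L)$ from $\Gamma,B\Rightarrow\Delta$ and $\Gamma\Rightarrow A,\Delta$ infer $\Gamma,A\to B\Rightarrow\Delta$; $(\to_R)$ from $\Gamma,A\Rightarrow B,\Delta$ infer $\Gamma\Rightarrow A\to B,\Delta$; $(\mathsf{refl})$ from $\Gamma,B,\Box B\Rightarrow\Delta$ infer $\Gamma,\Box B\Rightarrow\Delta$; $(\Box)$ from left premise $\Gamma,\Box\Pi\Rightarrow A,\Delta$ and right premise $\Box\Pi\Rightarrow A$ infer $\Gamma,\Box\Pi\Rightarrow\Box A,\Delta$; $(\mathsf{cut})$ from $\Gamma\Rightarrow A,\Delta$ and $\Gamma,A\Rightarrow\Delta$ infer $\Gamma\Rightarrow\Delta$. An $\infty$-proof is a possibly infinite tree of sequents built by these rules with leaves labelled by initial sequents, in which every infinite branch passes through a right premise of $(\Box)$ infinitely often; $\mathcal P$ is the set of all $\infty$-proofs. The $n$-fragment of an $\infty$-proof is the finite tree obtained by cutting every branch at the $n$-th (from the root) right premise of $(\Box)$; the main fragment is the $1$-fragment; the local height $|\pi|$ is the length of the longest branch of the main fragment (an $\infty$-proof consisting only of an initial sequent has height $0$). Write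 $\pi\sim_n\tau$ if the $n$-fragments of $\pi,\tau$ coincide, and $\pi\sim_0\tau$ always. $\mathcal P_n$ is the set of $\infty$-proofs with no application of $(\mathsf{cut})$ in their $n$-fragment, and $\mathcal P_0=\mathcal P$. A single-premise rule is strongly admissible in $\mathsf{Grz}_\infty+\mathsf{cut}$ if there is a mapping $\mathsf u:\mathcal P\to\mathcal P$ such that: (i) $\mathsf u$ is non-expansive: $\pi\sim_n\pi'$ implies $\mathsf u(\pi)\sim_n\mathsf u(\pi')$ for all $n$; (ii) $\mathsf u$ is adequate: $\pi\in\mathcal P_n$ implies $\mathsf u(\pi)\in\mathcal P_n$ for all $n$; (iii) $|\mathsf u(\pi)|\le|\pi|$ for all $\pi\in\mathcal P$; (iv) for every instance of the rule, $\mathsf u$ maps every $\infty$-proof of its premise to an $\infty$-proof of its conclusion. *)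

From HB Require Import structures.
From mathcomp Require Import all_boot.
From mathcomp Require Import finmap multiset.

Set Implicit Arguments.
Unset Strict Implicit.
Unset Printing Implicit Defensive.

Local Open Scope fset_scope.
Local Open Scope mset_scope.

Inductive form : Type :=
  | Atom of nat
  | Bot
  | Imp of form & form
  | Box of form.

Fixpoint form_enc (f : form) : GenTree.tree nat :=
  match f with
  | Atom p => GenTree.Leaf p
  | Bot => GenTree.Node 0 [::]
  | Imp A B => GenTree.Node 1 [:: form_enc A; form_enc B]
  | Box A => GenTree.Node 2 [:: form_enc A]
  end.

Fixpoint form_dec (t : GenTree.tree nat) : option form :=
  match t with
  | GenTree.Leaf p => Some (Atom p)
  | GenTree.Node 0 [::] => Some Bot
  | GenTree.Node 1 [:: a; b] =>
      match form_dec a, form_dec b with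
      | Some A, Some B => Some (Imp A B)
      | _, _ => None
      end
  | GenTree.Node 2 [:: a] =>
      match form_dec a with Some A => Some (Box A) | None => None end
  | _ => None
  end.

Lemma form_encK : pcancel form_enc form_dec.
Proof. by elim=> [p||A IHA B IHB|A IHA] //=; rewrite ?IHA ?IHB. Qed.

HB.instance Definition _ := Countable.copy form (pcan_type form_encK).

Definition fmset := {mset form}.
Definition sequent := (fmset * fmset)%type.

Definition boxes (Pi : fmset) : fmset := seq_mset (map Box (enum_mset Pi)).

Inductive rule : Type :=
  | RInit
  | RImpL of form & form
  | RImpR of form & form
  | RRefl of form
  | RBox of fmset & form
  | RCut of form.

Definition arity (r : rule) : nat :=
  match r with
  | RInit => 0
  | RImpR _ _ | RRefl _ => 1
  | RImpL _ _ | RBox _ _ | RCut _ => 2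
  end.

(* For (Box), premise 0 is the left
   premise and premise 1 is the right premise  Box Pi => A. *)
Definition rule_ok (r : rule) (s : sequent) (p : nat -> option sequent) : Prop :=
  match r with
  | RInit =>
      (exists (G D : fmset) (q : nat), s = (Atom q +` G, Atom q +` D))
      \/ (exists (G D : fmset), s = (Bot +` G, D))
  | RImpL A B => exists G D : fmset,
      [/\ s = (Imp A B +` G, D), p 0 = Some (B +` G, D) & p 1 = Some (G, A +` D)]
  | RImpR A B => exists G D : fmset,
      s = (G, Imp A B +` D) /\ p 0 = Some (A +` G, B +` D)
  | RRefl B => exists G D : fmset,
      s = (Box B +` G, D) /\ p 0 = Some (B +` (Box B +` G), D)
  | RBox Pi A => exists G D : fmset,
      [/\ s = (G `+` boxes Pi, Box A +` D),
          p 0 = Some (G `+` boxes Pi, A +` D)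
        & p 1 = Some (boxes Pi, [mset A])]
  | RCut A => exists G D : fmset,
      [/\ s = (G, D), p 0 = Some (G, A +` D) & p 1 = Some (A +` G, D)]
  end.

(* Possibly infinite trees: a node is addressed by the sequence of child
   indices from the root; [T a = None] means there is no node at a.    *)
Definition tree := seq nat -> option (sequent * rule).

Definition seq_at (T : tree) (a : seq nat) : option sequent := omap fst (T a).

Definition is_box_node (o : option (sequent * rule)) : bool :=
  if o is Some (_, RBox _ _) then true else false.

(* number of right premises of (Box) on the path from the root to a
   (including a itself if a is such a right premise) *)
Definition rcount (T : tree) (a : seq nat) : nat :=
  count (fun k => is_box_node (T (take k a)) && (nth 0 a k == 1)) (iota 0 (size a)).

Definition is_inf_proof (T : tree) : Prop :=
  [/\ T [::] <> None,
      (forall a i, T (rcons a i) <> None -> T a <> None),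
      (forall a s r, T a = Some (s, r) ->
          (forall i, T (rcons a i) <> None <-> i < arity r)
          /\ rule_ok r s (fun i => seq_at T (rcons a i)))
    & (* every infinite branch passes through a right premise of (Box)
         infinitely often *)
      (forall f : nat -> nat, (forall k, T (mkseq f k) <> None) ->
         forall m, exists2 k, m <= k &
           is_box_node (T (mkseq f k)) && (f k == 1))].

Definition inf_proof := {T : tree | is_inf_proof T}.
Definition tr (p : inf_proof) : tree := proj1_sig p.

(* n-fragment: every branch is cut at the n-th right premise of (Box);
   that node stays in the fragment as a leaf (its sequent belongs to the
   fragment, the rule applied to it and its children do not).
   [in_frag T n a]: position a belongs to the n-fragment of T
   (no position belongs to the 0-fragment). *)
Definition in_frag (T : tree) (n : nat) (a : seq nat) : Prop :=
  rcount T (take (size a).-1 a) < n.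

(* the rule applied at a belongs to the n-fragment *)
Definition rule_in_frag (T : tree) (n : nat) (a : seq nat) : Prop :=
  rcount T a < n.

Definition frag_agree (n : nat) (T U : tree) : Prop :=
  forall a, in_frag T n a ->
    seq_at T a = seq_at U a /\ (rule_in_frag T n a -> T a = U a).

Definition sim (n : nat) (p q : inf_proof) : Prop :=
  n = 0 \/ (frag_agree n (tr p) (tr q) /\ frag_agree n (tr q) (tr p)).

Definition in_Pn (n : nat) (p : inf_proof) : Prop :=
  forall a s A, tr p a = Some (s, RCut A) -> ~ rule_in_frag (tr p) n a.

(* |p| <= k : every branch of the main fragment (1-fragment) has length
   at most k, i.e. the local height of p is at most k. *)
Definition height_le (p : inf_proof) (k : nat) : Prop :=
  forall a, in_frag (tr p) 1 a -> tr p a <> None -> size a <= k.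

Definition root_seq (p : inf_proof) : option sequent := seq_at (tr p) [::].

(* A single-premise rule: a relation  premise -> conclusion. *)
Definition srule := sequent -> sequent -> Prop.

Definition strongly_admissible (R : srule) : Prop :=
  exists u : inf_proof -> inf_proof,
    [/\ (forall n p q, sim n p q -> sim n (u p) (u q)),
        (forall n p, in_Pn n p -> in_Pn n (u p)),
        (forall p k, height_le p k -> height_le (u p) k)
      & (forall s1 s2, R s1 s2 ->
           forall p, root_seq p = Some s1 -> root_seq (u p) = Some s2)].

Definition li_imp (A B : form) : srule := fun s1 s2 =>
  exists G D : fmset, s1 = (Imp A B +` G, D) /\ s2 = (B +` G, D).
Definition ri_imp (A B : form) : srule := fun s1 s2 =>
  exists G D : fmset, s1 = (Imp A B +` G, D) /\ s2 = (G, A +` D).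
Definition i_imp (A B : form) : srule := fun s1 s2 =>
  exists G D : fmset, s1 = (G, Imp A B +` D) /\ s2 = (A +` G, B +` D).
Definition i_bot : srule := fun s1 s2 =>
  exists G D : fmset, s1 = (G, Bot +` D) /\ s2 = (G, D).
Definition li_box (A : form) : srule := fun s1 s2 =>
  exists G D : fmset, s1 = (G, Box A +` D) /\ s2 = (G, A +` D).

(** Each rule is realised by one transformation of infinity-proofs: walk up
    the main fragment from the root and replace, in every sequent, the
    formula being inverted by its components; at a node where that formula
    is principal, drop the node and continue with the premise that already
    is the transformed sequent.  A right premise of (Box) does not contain
    the context of its conclusion, so it and everything above it is copied
    unchanged.  Every node of the new tree is read from a node of the old
    tree that is at least as deep and lies above the same number of right
    premises of (Box).  This yields non-expansiveness, adequacy and the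
    height bound, and a branch of the new tree lifts to a branch of the old
    one, so it passes right premises of (Box) infinitely often. *)

From mathcomp Require Import all_boot.
From mathcomp Require Import finmap multiset.

Set Implicit Arguments.
Unset Strict Implicit.
Unset Printing Implicit Defensive.

Local Open Scope mset_scope.

Lemma rcount_rcons T a i :
  rcount T (rcons a i) = rcount T a + (is_box_node (T a) && (i == 1)).
Proof.
rewrite /rcount size_rcons -(addn1 (size a)) iotaD count_cat /= add0n addn0.
congr (_ + _); last by rewrite -cats1 take_size_cat // nth_cat ltnn subnn.
apply: eq_in_count => k; rewrite mem_iota add0n => /= hk.
by rewrite -cats1 takel_cat ?(ltnW hk) // nth_cat hk.
Qed.

Lemma rcount_prefix T a b : prefix a b -> rcount T a <= rcount T b.
Proof.
case/prefixP=> s ->; elim/last_ind: s => [|s i IH]; first by rewrite cats0.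
by rewrite -rcons_cat rcount_rcons (leq_trans IH) ?leq_addr.
Qed.

Lemma in_frag_rcons T n a i : in_frag T n (rcons a i) <-> rcount T a < n.
Proof. by rewrite /in_frag size_rcons /= -cats1 take_size_cat. Qed.

Lemma in_frag_rule T n a : rule_in_frag T n a -> in_frag T n a.
Proof.
case/lastP: a => [//|a i]; rewrite /rule_in_frag rcount_rcons in_frag_rcons.
exact: leq_ltn_trans (leq_addr _ _).
Qed.

Lemma frag_agree_node n T U a :
  frag_agree n T U -> rule_in_frag T n a -> T a = U a.
Proof. by move=> agree ha; apply: (agree a (in_frag_rule ha)).2. Qed.

Lemma inf_proof_prefix T a b :
  is_inf_proof T -> prefix a b -> T b <> None -> T a <> None.
Proof.
case=> _ closed _ _ /prefixP [s ->]; elim/last_ind: s => [|s i IH].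
  by rewrite cats0.
by rewrite -rcons_cat => /closed.
Qed.

Lemma mkseq_prefix (X : eqType) (f : nat -> X) m n :
  m <= n -> prefix (mkseq f m) (mkseq f n).
Proof. by move/subnKC <-; rewrite /mkseq iotaD map_cat prefix_prefix. Qed.

Lemma rcount_mkseqS T f k : rcount T (mkseq f k.+1) =
  rcount T (mkseq f k) + (is_box_node (T (mkseq f k)) && (f k == 1)).
Proof. by rewrite mkseqS rcount_rcons. Qed.

Definition right_box_often (T : tree) (f : nat -> nat) : Prop :=
  forall m, exists2 k, m <= k & is_box_node (T (mkseq f k)) && (f k == 1).

Definition rcount_unbounded (T : tree) (f : nat -> nat) : Prop :=
  forall n, exists k, n <= rcount T (mkseq f k).

Lemma right_box_oftenP T f : right_box_often T f <-> rcount_unbounded T f.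
Proof.
split=> [often|unbounded m].
  elim=> [|n [k hk]]; first by exists 0.
  have [j hkj hit] := often k; exists j.+1.
  rewrite rcount_mkseqS hit addn1 ltnS (leq_trans hk) //.
  exact/rcount_prefix/mkseq_prefix.
have [k] := unbounded (rcount T (mkseq f m)).+1.
have [hkm|/ltnW/subnKC <-] := leqP k m.
  by rewrite ltnNge rcount_prefix ?mkseq_prefix.
elim: (k - m) => [|d IH]; first by rewrite addn0 ltnn.
rewrite addnS rcount_mkseqS; case hit: (_ && _).
  by exists (m + d); rewrite ?leq_addr.
by rewrite addn0.
Qed.

Lemma nth_prefix (X : eqType) (x0 : X) (a b : seq X) i :
  prefix a b -> i < size a -> nth x0 b i = nth x0 a i.
Proof. by case/prefixP=> s -> hi; rewrite nth_cat hi. Qed.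

Lemma prefix_chain_limit (X : eqType) (x0 : X) (b : nat -> seq X) :
  (forall k, k <= size (b k)) -> (forall k, prefix (b k) (b k.+1)) ->
  forall k, mkseq (fun j => nth x0 (b j.+1) j) k = take k (b k).
Proof.
move=> long chain.
have mono j k : j <= k -> prefix (b j) (b k).
  move/subnKC <-; elim: (k - j) => [|d IH]; first by rewrite addn0 prefix_refl.
  by rewrite addnS (prefix_trans IH).
move=> k; apply: (@eq_from_nth _ x0) => [|i]; rewrite size_mkseq.
  by rewrite size_take_min (minn_idPl (long k)).
move=> hi; rewrite nth_mkseq // nth_take //.
by rewrite (nth_prefix _ (mono _ _ hi)) // (leq_trans _ (long _)).
Qed.

(** * Transforming the main fragment *)

Definition is_box_rule (r : rule) : bool := if r is RBox _ _ then true else false.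

Lemma eq_rule_ok r s p q : p =1 q -> rule_ok r s p -> rule_ok r s q.
Proof. by move=> E; case: r => [|A B|A B|B|Pi A|A] //=; rewrite !E. Qed.

Section Transformation.

Variables (dom : pred sequent) (inv : sequent -> sequent).
Variable skip : rule -> option nat.

Hypothesis skip_premise : forall r s p c,
  skip r = Some c -> rule_ok r s p -> dom s ->
  p c = Some (inv s) /\ ~~ (is_box_rule r && (c == 1)).
Hypothesis inv_rule_ok : forall r s p,
  skip r = None -> rule_ok r s p -> dom s ->
  rule_ok r (inv s) (fun i => if is_box_rule r && (i == 1) then p i else omap inv (p i)).
Hypothesis dom_premise : forall r s p i s',
  skip r = None -> rule_ok r s p -> dom s ->
  i < arity r -> ~~ (is_box_rule r && (i == 1)) -> p i = Some s' -> dom s'.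

(* A cursor (b, act) points at position b of the original tree; act tells
   whether [inv] is still applied there: the root is in [dom], and the path
   to b has passed neither a node where [skip] jumps to a premise nor a
   right premise of (Box). *)
Definition cursor := (seq nat * bool)%type.

Definition settle (T : tree) (st : cursor) : cursor :=
  if st.2 then
    if T st.1 is Some (_, r) then
      if skip r is Some c then (rcons st.1 c, false) else st
    else st
  else st.

Definition follow (T : tree) (st : cursor) (i : nat) : cursor :=
  let st' := settle T st in
  (rcons st'.1 i, st'.2 && ~~ (is_box_node (T st'.1) && (i == 1))).

Definition trace (T : tree) (a : seq nat) : cursor :=
  foldl (follow T) ([::], oapp dom false (seq_at T [::])) a.

Definition source (T : tree) (a : seq nat) : cursor := settle T (trace T a).

Definition transform (T : tree) : tree := fun a =>
  let: (b, act) := source T a in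
  omap (fun sr => (if act then inv sr.1 else sr.1, sr.2)) (T b).

Variant settle_spec (T : tree) (b : seq nat) (act : bool) : cursor -> Prop :=
  | SettleStay of (act -> forall s r, T b = Some (s, r) -> skip r = None) :
      settle_spec T b act (b, act)
  | SettleSkip s r c of act & T b = Some (s, r) & skip r = Some c :
      settle_spec T b act (rcons b c, false).

Lemma settleP T b act : settle_spec T b act (settle T (b, act)).
Proof.
rewrite /settle /=; case: act; last exact: SettleStay.
case eb: (T b) => [[s r]|]; last by apply: SettleStay => _ s r; rewrite eb.
case er: (skip r) => [c|]; first exact: SettleSkip eb er.
by apply: SettleStay => _ s' r'; rewrite eb => -[_ <-].
Qed.

Lemma settle_eq T U st : T st.1 = U st.1 -> settle T st = settle U st.
Proof. by rewrite /settle => ->. Qed.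

Lemma trace_rcons T a i : trace T (rcons a i) =
  (rcons (source T a).1 i,
   (source T a).2 && ~~ (is_box_node (T (source T a).1) && (i == 1))).
Proof. by rewrite /trace foldl_rcons. Qed.

Section OneProof.

Variable T : tree.
Hypothesis T_proof : is_inf_proof T.

Let T_local a s r : T a = Some (s, r) ->
  (forall i, T (rcons a i) <> None <-> i < arity r)
  /\ rule_ok r s (fun i => seq_at T (rcons a i)).
Proof. by case: T_proof => _ _ local _; apply: local. Qed.

Definition cursor_ok (st : cursor) : Prop :=
  st.2 -> rcount T st.1 = 0 /\ forall s r, T st.1 = Some (s, r) -> dom s.

Lemma trace_ok a : cursor_ok (trace T a).
Proof.
elim/last_ind: a => [|a i IH].
  by rewrite /cursor_ok /trace /= /seq_at; case: (T [::]) => [[s r]|] //= hs;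
    split=> // s' r' [<- _].
rewrite trace_rcons /source; case: (trace T a) IH => b act IH.
case: settleP => [stay|s r c _ _ _ //] /= /andP [act1 not_rb].
have [rc0 bdom] := IH act1.
split; first by rewrite rcount_rcons rc0 (negbTE not_rb).
move=> s' r' /= ei; case eb: (T b) => [[s r]|]; last first.
  by case: T_proof => _ closed _ _; case: (closed b i); rewrite ?eb ?ei.
have [arity_ok rok] := T_local eb.
apply: (dom_premise (i := i) (stay act1 _ _ eb) rok (bdom _ _ eb)).
- by apply/arity_ok; rewrite ei.
- by rewrite eb in not_rb.
- by rewrite /seq_at ei.
Qed.

Lemma rcount_settle st : cursor_ok st -> rcount T (settle T st).1 = rcount T st.1.
Proof.
case: st => b act; case: settleP => //= s r c act1 eb er /(_ act1) [_ bdom].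
have [_ rok] := T_local eb.
have [_ not_rb] := skip_premise er rok (bdom _ _ eb).
by rewrite rcount_rcons eb (negbTE not_rb) addn0.
Qed.

Lemma settle_node st : cursor_ok st -> T (settle T st).1 <> None <-> T st.1 <> None.
Proof.
case: st => b act; case: settleP => //= s r c act1 eb er /(_ act1) [_ bdom].
have [_ rok] := T_local eb.
have [prem _] := skip_premise er rok (bdom _ _ eb).
by rewrite eb; move: prem; rewrite /seq_at; case: (T (rcons b c)).
Qed.

Lemma size_settle st : size st.1 <= size (settle T st).1.
Proof. by case: st => b act; case: settleP => //= *; rewrite size_rcons. Qed.

Lemma source_active a s r : (source T a).2 -> T (source T a).1 = Some (s, r) ->
  skip r = None /\ dom s.
Proof.
have := @trace_ok a; rewrite /source; case: (trace T a) => b act.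
case: settleP => //= stay ok act1 eb; have [_ bdom] := ok act1.
by split; [apply: stay act1 _ _ eb | apply: bdom eb].
Qed.

Lemma seq_transform a : seq_at (transform T) a =
  if (trace T a).2 then omap inv (seq_at T (trace T a).1) else seq_at T (trace T a).1.
Proof.
have := @trace_ok a; rewrite /seq_at /transform /source.
case: (trace T a) => b act; case: settleP => [_ _|s r c act1 eb er /(_ act1) [_ bdom]].
  by case: (T b) => [[s r]|]; case: act.
have [_ rok] := T_local eb.
have [prem _] := skip_premise er rok (bdom _ _ eb).
rewrite act1 eb; move: prem; rewrite /seq_at.
by case: (T (rcons b c)) => [[? ?]|] //= [->].
Qed.

Lemma transform_node a : transform T a <> None <-> T (source T a).1 <> None.
Proof. by rewrite /transform; case: (source T a) => b act; case: (T b). Qed.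

Lemma is_box_transform a : is_box_node (transform T a) = is_box_node (T (source T a).1).
Proof. by rewrite /transform; case: (source T a) => b act; case: (T b) => [[s r]|]. Qed.

Lemma rcount_transform a : rcount (transform T) a = rcount T (source T a).1.
Proof.
elim/last_ind: a => [|a i IH]; rewrite /source rcount_settle;
  [by [] | exact: trace_ok | | exact: trace_ok].
by rewrite trace_rcons /= !rcount_rcons IH is_box_transform.
Qed.

Lemma source_rcons_prefix a i : prefix (source T a).1 (source T (rcons a i)).1.
Proof.
rewrite {2}/source trace_rcons; case: settleP => [_|s r c _ _ _] /=.
  exact: prefix_rcons.
by rewrite -!cats1 -catA prefix_prefix.
Qed.

Lemma size_source a : size a <= size (source T a).1.
Proof.
elim/last_ind: a => [//|a i IH].
apply: leq_trans (size_settle (trace T (rcons a i))).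
by rewrite trace_rcons /= !size_rcons ltnS.
Qed.

Lemma source_node a : T (source T a).1 <> None <-> T (trace T a).1 <> None.
Proof. exact/settle_node/trace_ok. Qed.

Lemma in_frag_trace n a :
  0 < n -> in_frag (transform T) n a -> in_frag T n (trace T a).1.
Proof.
move=> n_gt0; case/lastP: a => [//|a i].
by rewrite trace_rcons !in_frag_rcons rcount_transform.
Qed.

Lemma in_frag_source n a :
  0 < n -> in_frag (transform T) n a -> in_frag T n (source T a).1.
Proof.
move=> n_gt0 /(in_frag_trace n_gt0); have := @trace_ok a.
rewrite /source; case: (trace T a) => b act.
case: settleP => //= s r c act1 _ _ /(_ act1) [rc0 _] _.
by rewrite in_frag_rcons rc0.
Qed.

Lemma transform_inf_proof : is_inf_proof (transform T).
Proof.
have [root_ok closed _ branches] := T_proof.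
split.
- by rewrite transform_node source_node.
- move=> a i; rewrite transform_node source_node trace_rcons /= => /closed.
  by rewrite transform_node.
- move=> a s' r' ea; case el: (source T a) => [b act].
  move: ea; rewrite {1}/transform el; case eb: (T b) => [[s r]|] //= [<- <-].
  have [arity_ok rok] := T_local eb.
  have children i : transform T (rcons a i) <> None <-> T (rcons b i) <> None.
    by rewrite transform_node source_node trace_rcons el.
  have premises i : seq_at (transform T) (rcons a i) =
      if act && ~~ (is_box_rule r && (i == 1))
      then omap inv (seq_at T (rcons b i)) else seq_at T (rcons b i).
    by rewrite seq_transform trace_rcons el /= eb.
  split=> [i|]; first by rewrite children; exact: arity_ok.
  case: act el premises => el premises; last first.
    by apply: eq_rule_ok rok => i; rewrite premises.
  have [skip0 sdom] : skip r = None /\ dom s.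
    by apply: (source_active (a := a)); rewrite el.
  by apply: eq_rule_ok (inv_rule_ok skip0 rok sdom) => i; rewrite premises; case: ifP.
- (* The sources along f form a prefix chain; its limit is a branch of T
     passing as many right premises of (Box) as f does. *)
  move=> f f_nodes; apply/right_box_oftenP => n.
  pose b k := (source T (mkseq f k)).1.
  have b_long k : k <= size (b k) by rewrite -{1}(size_mkseq f k) size_source.
  have b_chain k : prefix (b k) (b k.+1) by rewrite /b mkseqS source_rcons_prefix.
  have g_take := prefix_chain_limit 0 b_long b_chain.
  have g_nodes k : T (mkseq (fun j => nth 0 (b j.+1) j) k) <> None.
    rewrite g_take; apply: inf_proof_prefix T_proof (prefix_take _ _) _.
    exact/transform_node.
  have [k hk] := (right_box_oftenP _ _).1 (branches _ g_nodes) n.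
  exists k; apply: leq_trans hk _.
  by rewrite rcount_transform g_take rcount_prefix // prefix_take.
Qed.

Lemma transform_height k :
  (forall a, in_frag T 1 a -> T a <> None -> size a <= k) ->
  forall a, in_frag (transform T) 1 a -> transform T a <> None -> size a <= k.
Proof.
move=> height a ha /transform_node node; apply: leq_trans (size_source a) _.
exact: height (in_frag_source _ ha) node.
Qed.

Lemma transform_cut_free n :
  (forall a s A, T a = Some (s, RCut A) -> ~ rule_in_frag T n a) ->
  forall a s A, transform T a = Some (s, RCut A) -> ~ rule_in_frag (transform T) n a.
Proof.
move=> cut_free a s A; rewrite /rule_in_frag rcount_transform /transform.
case: (source T a) => b act; case eb: (T b) => [[s0 r]|] //= [_ er].
by rewrite er in eb; apply: cut_free eb.
Qed.

End OneProof.

Lemma transform_frag_agree n T U : is_inf_proof T -> is_inf_proof U -> 0 < n ->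
  frag_agree n T U -> frag_agree n (transform T) (transform U).
Proof.
move=> T_proof U_proof n_gt0 agree.
have source_eq a : rule_in_frag (transform T) n a -> trace T a = trace U a ->
    source T a = source U a /\ T (source T a).1 = U (source T a).1.
  rewrite /rule_in_frag rcount_transform // => ha tr_eq; split.
    rewrite /source -tr_eq; apply: settle_eq; apply: frag_agree_node agree _.
    by rewrite /rule_in_frag -(rcount_settle T_proof (trace_ok T_proof (a := a))).
  exact: frag_agree_node agree ha.
have trace_eq a : in_frag (transform T) n a -> trace T a = trace U a.
  elim/last_ind: a => [|a i IH].
    by rewrite /trace /= (agree [::] n_gt0).1.
  move/in_frag_rcons => ha.
  have [source_eq' node_eq] := source_eq a ha (IH (in_frag_rule ha)).
  by rewrite !trace_rcons -source_eq' node_eq.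
move=> a ha; split.
  by rewrite !seq_transform // -trace_eq // (agree _ (in_frag_trace T_proof n_gt0 ha)).1.
move=> hr; have [source_eq' node_eq] := source_eq a hr (trace_eq a (in_frag_rule hr)).
by rewrite /transform -source_eq'; case: (source T a) node_eq => b act /= ->.
Qed.

Definition transform_proof (p : inf_proof) : inf_proof :=
  exist _ (transform (tr p)) (transform_inf_proof (proj2_sig p)).

Theorem transform_strongly_admissible (R : srule) :
  (forall s1 s2, R s1 s2 -> dom s1 /\ inv s1 = s2) -> strongly_admissible R.
Proof.
move=> R_inv; exists transform_proof; split.
- move=> n p q; case: (posnP n) => [-> _|n_gt0]; first by left.
  case=> [n0|[pq qp]]; first by rewrite n0 in n_gt0.
  have [p_proof q_proof] := (proj2_sig p, proj2_sig q).
  by right; split; apply: transform_frag_agree.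
- by move=> n p cut_free; apply: transform_cut_free (proj2_sig p) _ cut_free.
- by move=> p k height; apply: transform_height (proj2_sig p) _ height.
- move=> s1 s2 /R_inv [s1_dom <-] p root.
  rewrite /root_seq /= seq_transform; last exact: (proj2_sig p).
  by move: root; rewrite /root_seq /trace /= => ->; rewrite /= s1_dom.
Qed.

End Transformation.

(** * Replacing formulas of the end-sequent *)

Lemma msubset_addl (X N M : fmset) : X `<=` M -> X `<=` N `+` M.
Proof.
by move/msubsetP=> XM; apply/msubsetP=> x; rewrite msetE2 (leq_trans (XM x)) ?leq_addl.
Qed.

Lemma msubset_mset1D (X M : fmset) y : y \notin X -> X `<=` y +` M -> X `<=` M.
Proof.
move=> yX /msubsetP XyM; apply/msubsetP=> x; have := XyM x.
rewrite msetE2 msetnE; case: eqP => [->|_] //=.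
by rewrite (mset_eq0P yX).
Qed.

Lemma msubset_boxesD (X M : fmset) Pi :
  (forall B, Box B \notin X) -> X `<=` M `+` boxes Pi -> X `<=` M.
Proof.
move=> noBox /msubsetP XMb; apply/msubsetP=> x; have := XMb x.
rewrite msetE2 /boxes mset_seqE; case: (boolP (x \in map Box (enum_mset Pi))).
  by case/mapP=> B _ ->; rewrite (mset_eq0P (noBox B)).
by move/count_memPn ->; rewrite addn0.
Qed.

Definition replace (X Y M : fmset) : fmset := Y `+` (M `\` X).

Lemma replaceDl X Y N M : X `<=` M -> replace X Y (N `+` M) = N `+` replace X Y M.
Proof. by move=> XM; rewrite /replace -msetDBA // msetDCA. Qed.

Lemma replaceDr X Y M N : X `<=` M -> replace X Y (M `+` N) = replace X Y M `+` N.
Proof. by move=> XM; rewrite msetDC replaceDl // msetDC. Qed.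

Lemma replaceK X Y M : replace X Y (X `+` M) = Y `+` M.
Proof. by rewrite /replace msetDKB. Qed.

Lemma replace0 Y M : replace mset0 Y M = Y `+` M.
Proof. by rewrite /replace msetB0. Qed.

Definition replace_rule (XL XR L R : fmset) : srule := fun s1 s2 =>
  exists G D : fmset, s1 = (XL `+` G, XR `+` D) /\ s2 = (L `+` G, R `+` D).

Section Replacement.

Variables (XL XR L R : fmset) (c : nat).
(* Atoms and Bot on the left may be principal in initial sequents, and boxes
   on the left may belong to the boxed context of (Box). *)
Hypothesis XL_imps : forall x, x \in XL -> exists A B, x = Imp A B.
Hypothesis XR_atom_free : forall q, Atom q \notin XR.

Definition replaceable (s : sequent) : bool := (XL `<=` s.1) && (XR `<=` s.2).

Definition replace_seq (s : sequent) : sequent := (replace XL L s.1, replace XR R s.2).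

Definition principal_free (r : rule) : bool :=
  match r with
  | RImpL A B => Imp A B \notin XL
  | RImpR A B => Imp A B \notin XR
  | RRefl B => Box B \notin XL
  | RBox _ A => Box A \notin XR
  | _ => true
  end.

Definition replace_skip (r : rule) : option nat :=
  if principal_free r then None else Some c.

Hypothesis principal_premise : forall r s p,
  ~~ principal_free r -> rule_ok r s p -> replaceable s ->
  p c = Some (replace_seq s) /\ ~~ (is_box_rule r && (c == 1)).

Let XL_no_atom q : Atom q \notin XL.
Proof. by apply/negP=> /XL_imps [A [B]]. Qed.

Let XL_no_bot : Bot \notin XL.
Proof. by apply/negP=> /XL_imps [A [B]]. Qed.

Let XL_no_box B : Box B \notin XL.
Proof. by apply/negP=> /XL_imps [A [B']]. Qed.

Lemma replace_skip_premise r s p c' : replace_skip r = Some c' ->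
  rule_ok r s p -> replaceable s ->
  p c' = Some (replace_seq s) /\ ~~ (is_box_rule r && (c' == 1)).
Proof.
by rewrite /replace_skip; case: ifP => // /negbT free [<-]; apply: principal_premise.
Qed.

Lemma replace_rule_ok r s p : replace_skip r = None ->
  rule_ok r s p -> replaceable s ->
  rule_ok r (replace_seq s)
    (fun i => if is_box_rule r && (i == 1) then p i else omap replace_seq (p i)).
Proof.
rewrite /replace_skip; case: ifP => // free _.
case: r free => [|A B|A B|B|Pi A|A] /= free.
- case=> [[G [D [q ->]]]|[G [D ->]]] /andP [/= hG hD].
    have {}hG : XL `<=` G by apply: msubset_mset1D (XL_no_atom q) hG.
    have {}hD : XR `<=` D by apply: msubset_mset1D (XR_atom_free q) hD.
    left; exists (replace XL L G), (replace XR R D), q.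
    by rewrite /replace_seq /= !replaceDl.
  have {}hG : XL `<=` G by apply: msubset_mset1D XL_no_bot hG.
  right; exists (replace XL L G), (replace XR R D).
  by rewrite /replace_seq /= replaceDl.
- case=> G [D [-> e0 e1]] /andP [/= /(msubset_mset1D free) hG hD].
  exists (replace XL L G), (replace XR R D).
  by rewrite e0 e1 /replace_seq /= !replaceDl.
- case=> G [D [-> e0]] /andP [/= hG /(msubset_mset1D free) hD].
  exists (replace XL L G), (replace XR R D).
  by rewrite e0 /replace_seq /= !replaceDl.
- case=> G [D [-> e0]] /andP [/= hBG _].
  have hG : XL `<=` G by apply: msubset_mset1D free hBG.
  exists (replace XL L G), (replace XR R D).
  by rewrite e0 /replace_seq /= !replaceDl.
- case=> G [D [-> e0 e1]] /andP [/= /(msubset_boxesD XL_no_box) hG].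
  move/(msubset_mset1D free) => hD.
  exists (replace XL L G), (replace XR R D).
  by rewrite e0 e1 /replace_seq /= replaceDr ?replaceDl.
- case=> G [D [-> e0 e1]] /andP [/= hG hD].
  exists (replace XL L G), (replace XR R D).
  by rewrite e0 e1 /replace_seq /= !replaceDl.
Qed.

Lemma replace_dom_premise r s p i s' : replace_skip r = None ->
  rule_ok r s p -> replaceable s ->
  i < arity r -> ~~ (is_box_rule r && (i == 1)) -> p i = Some s' -> replaceable s'.
Proof.
rewrite /replace_skip /replaceable; case: ifP => // free _.
case: r free => [|A B|A B|B|Pi A|A] //= free.
- case=> G [D [-> e0 e1]] /andP [/= /(msubset_mset1D free) hG hD].
  by case: i => [|[|i]] //= _ _; rewrite ?e0 ?e1 => -[<-]; rewrite /= ?msubset_addl ?hG.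
- case=> G [D [-> e0]] /andP [/= hG /(msubset_mset1D free) hD].
  by case: i => [|i] //= _ _; rewrite e0 => -[<-]; rewrite /= !msubset_addl.
- case=> G [D [-> e0]] /andP [/= hBG hD].
  by case: i => [|i] //= _ _; rewrite e0 => -[<-]; rewrite /= msubset_addl.
- case=> G [D [-> e0 e1]] /andP [/= hG /(msubset_mset1D free) hD].
  by case: i => [|[|i]] //= _ _; rewrite e0 => -[<-]; rewrite /= hG msubset_addl.
- case=> G [D [-> e0 e1]] /andP [/= hG hD].
  case: i => [|[|i]] //= _ _; rewrite ?e0 ?e1 => -[<-];
    by rewrite /= msubset_addl ?hG ?hD.
Qed.

Lemma replace_rule_strongly_admissible : strongly_admissible (replace_rule XL XR L R).
Proof.
apply: (transform_strongly_admissible replace_skip_premise replace_rule_ok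
          replace_dom_premise).
move=> s1 s2 [G [D [-> ->]]]; split.
  by apply/andP; split; apply/msubsetP=> x; rewrite msetE2 leq_addr.
by rewrite /replace_seq /= !replaceK.
Qed.

End Replacement.

Lemma strongly_admissible_sub (R1 R2 : srule) :
  (forall s1 s2, R1 s1 s2 -> R2 s1 s2) ->
  strongly_admissible R2 -> strongly_admissible R1.
Proof. by move=> sub [u [? ? ? root]]; exists u; split=> // s1 s2 /sub; apply: root. Qed.

Lemma li_imp_strongly_admissible A B : strongly_admissible (li_imp A B).
Proof.
apply: (strongly_admissible_sub _ (@replace_rule_strongly_admissible
  [mset Imp A B] mset0 [mset B] mset0 0 _ _ _)).
- by move=> s1 s2 [G [D [-> ->]]]; exists G, D; rewrite !mset0D.
- by move=> x /mset1P ->; exists A, B.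
- by move=> q; rewrite in_mset0.
move=> [|A' B'|A' B'|B'|Pi A'|A'] s p //=; rewrite ?in_mset0 //
  => /negbNE /mset1P // [-> ->].
case=> G [D [-> e0 _]] _.
by rewrite e0 /replace_seq /= replaceK replace0 mset0D.
Qed.

Lemma ri_imp_strongly_admissible A B : strongly_admissible (ri_imp A B).
Proof.
apply: (strongly_admissible_sub _ (@replace_rule_strongly_admissible
  [mset Imp A B] mset0 mset0 [mset A] 1 _ _ _)).
- by move=> s1 s2 [G [D [-> ->]]]; exists G, D; rewrite !mset0D.
- by move=> x /mset1P ->; exists A, B.
- by move=> q; rewrite in_mset0.
move=> [|A' B'|A' B'|B'|Pi A'|A'] s p //=; rewrite ?in_mset0 //
  => /negbNE /mset1P // [-> ->].
case=> G [D [-> _ e1]] _.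
by rewrite e1 /replace_seq /= replaceK replace0 mset0D.
Qed.

Lemma i_imp_strongly_admissible A B : strongly_admissible (i_imp A B).
Proof.
apply: (strongly_admissible_sub _ (@replace_rule_strongly_admissible
  mset0 [mset Imp A B] [mset A] [mset B] 0 _ _ _)).
- by move=> s1 s2 [G [D [-> ->]]]; exists G, D; rewrite !mset0D.
- by move=> x; rewrite in_mset0.
- by move=> q; rewrite in_mset1.
move=> [|A' B'|A' B'|B'|Pi A'|A'] s p //=; rewrite ?in_mset0 //
  => /negbNE /mset1P // [-> ->].
case=> G [D [-> e0]] _.
by rewrite e0 /replace_seq /= replaceK replace0.
Qed.

Lemma i_bot_strongly_admissible : strongly_admissible i_bot.
Proof.
apply: (strongly_admissible_sub _ (@replace_rule_strongly_admissible
  mset0 [mset Bot] mset0 mset0 0 _ _ _)).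
- by move=> s1 s2 [G [D [-> ->]]]; exists G, D; rewrite !mset0D.
- by move=> x; rewrite in_mset0.
- by move=> q; rewrite in_mset1.
by move=> [|A B|A B|B|Pi A|A] s p //=; rewrite ?in_mset0 // => /negbNE /mset1P.
Qed.

Lemma li_box_strongly_admissible A : strongly_admissible (li_box A).
Proof.
apply: (strongly_admissible_sub _ (@replace_rule_strongly_admissible
  mset0 [mset Box A] mset0 [mset A] 0 _ _ _)).
- by move=> s1 s2 [G [D [-> ->]]]; exists G, D; rewrite !mset0D.
- by move=> x; rewrite in_mset0.
- by move=> q; rewrite in_mset1.
move=> [|A' B'|A' B'|B'|Pi A'|A'] s p //=; rewrite ?in_mset0 //
  => /negbNE /mset1P // [->].
case=> G [D [-> e0 _]] _.
by rewrite e0 /replace_seq /= replaceK !replace0 mset0D.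
Qed.

Theorem lemma5p2 : forall A B : form,
  [/\ strongly_admissible (li_imp A B),
      strongly_admissible (ri_imp A B),
      strongly_admissible (i_imp A B),
      strongly_admissible i_bot
    & strongly_admissible (li_box A)].
Proof.
move=> A B; split.
- exact: li_imp_strongly_admissible.
- exact: ri_imp_strongly_admissible.
- exact: i_imp_strongly_admissible.
- exact: i_bot_strongly_admissible.
- exact: li_box_strongly_admissible.
Qed.
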